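(* Let $X$ be a $T_1$ space and $Q\subset C(X)$. The following are equivalent: (1) $Q$ is compact in $(C(X),\tau_\Gamma)$; (2) $Q$ is countably compact in $(C(X),\tau_\Gamma)$; (3) $Q$ is pseudocompact in $(C(X),\tau_\Gamma)$ (i.e. every continuous real-valued function on $Q$ with the subspace topology from $\tau_\Gamma$ is bounded).
   Context: $C(X)$ is the set of continuous real-valued functions on $X$, each identified with its graph in $X\times\mathbb{R}$. The graph topology $\tau_\Gamma$ on $C(X)$ has base $\{F_G: G\text{ open in }X\times\mathbb{R}\}$ where $F_G=\{f\in C(X): f\subset G\}$. *)

From Stdlib Require Import Reals List.
Open Scope R_scope.

Definition is_topology {T : Type} (open : (T -> Prop) -> Prop) : Prop :=
  open (fun _ => True) /\
  open (fun _ => False) /\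
  (forall U V, open U -> open V -> open (fun x => U x /\ V x)) /\
  (forall C : (T -> Prop) -> Prop, (forall U, C U -> open U) ->
     open (fun x => exists U, C U /\ U x)).

Definition T1 {T : Type} (open : (T -> Prop) -> Prop) : Prop :=
  forall x y : T, x <> y -> exists U, open U /\ U x /\ ~ U y.

Definition R_open (V : R -> Prop) : Prop :=
  forall y, V y -> exists eps, eps > 0 /\ forall z, Rabs (z - y) < eps -> V z.

Definition prod_open {X : Type} (openX : (X -> Prop) -> Prop)
  (W : X * R -> Prop) : Prop :=
  forall x y, W (x, y) ->
    exists U eps, openX U /\ U x /\ eps > 0 /\
      forall x' y', U x' -> Rabs (y' - y) < eps -> W (x', y').

Definition continuous {A B : Type} (openA : (A -> Prop) -> Prop)
  (openB : (B -> Prop) -> Prop) (f : A -> B) : Prop :=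
  forall V, openB V -> openA (fun a => V (f a)).

Definition CX {X : Type} (openX : (X -> Prop) -> Prop) : Type :=
  { f : X -> R | continuous openX R_open f }.

Definition graph_in {X : Type} (f : X -> R) (G : X * R -> Prop) : Prop :=
  forall x, G (x, f x).

Definition F_G {X : Type} {openX : (X -> Prop) -> Prop}
  (G : X * R -> Prop) : CX openX -> Prop :=
  fun f => graph_in (proj1_sig f) G.

(* Graph topology tau_Gamma: the topology generated by the base
   { F_G : G open in X x R }. *)
Definition graph_open {X : Type} (openX : (X -> Prop) -> Prop)
  (U : CX openX -> Prop) : Prop :=
  forall f, U f -> exists G, prod_open openX G /\ F_G G f /\
    forall g, F_G G g -> U g.

Definition compact_in {T : Type} (open : (T -> Prop) -> Prop)
  (Q : T -> Prop) : Prop :=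
  forall C : (T -> Prop) -> Prop,
    (forall U, C U -> open U) ->
    (forall q, Q q -> exists U, C U /\ U q) ->
    exists l : list (T -> Prop),
      (forall U, In U l -> C U) /\
      (forall q, Q q -> exists U, In U l /\ U q).

Definition countably_compact_in {T : Type} (open : (T -> Prop) -> Prop)
  (Q : T -> Prop) : Prop :=
  forall U : nat -> (T -> Prop),
    (forall n, open (U n)) ->
    (forall q, Q q -> exists n, U n q) ->
    exists N, forall q, Q q -> exists n, (n < N)%nat /\ U n q.

Definition subspace_open {T : Type} (open : (T -> Prop) -> Prop)
  (Q : T -> Prop) (V : {t : T | Q t} -> Prop) : Prop :=
  exists U, open U /\ forall q : {t : T | Q t}, V q <-> U (proj1_sig q).

Definition pseudocompact_in {T : Type} (open : (T -> Prop) -> Prop)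
  (Q : T -> Prop) : Prop :=
  forall g : {t : T | Q t} -> R,
    continuous (subspace_open open Q) R_open g ->
    exists M, forall q, Rabs (g q) <= M.

From Stdlib Require Import Reals List Lra Lia Classical ClassicalEpsilon.
Open Scope R_scope.

(* Compact => countably compact => pseudocompact holds in every space.  For
   pseudocompact => compact we show that on Q the graph topology coincides
   with the topology of the truncated uniform distance.  Tubes around graphs
   are graph-open, so uniformly continuous functions are graph-continuous; the
   converse inclusion (graph_neighbourhood_uniform) is the heart of the proof:
   if uniform approximants k j in Q of f left a graph neighbourhood G of f at
   points z j, then z would be a closed discrete sequence (using T1), graph
   neighbourhoods could prescribe independent tolerances at the points z n,
   and weighted sums along z would give an unbounded continuous function on Q.
   Finally a pseudocompact subset of a pseudometric space is totally bounded
   and has Lebesgue numbers for its open covers, hence is compact. *)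

Lemma term_le_sum (a : nat -> R) n j :
  (forall i, 0 <= a i) -> (j <= n)%nat -> a j <= sum_f_R0 a n.
Proof.
  intros Ha; induction n as [|n IH]; intros Hj.
  - replace j with 0%nat by lia; simpl; lra.
  - simpl. destruct (Nat.eq_dec j (S n)) as [->|Hne].
    + pose proof (cond_pos_sum a n Ha); lra.
    + pose proof (IH ltac:(lia)); pose proof (Ha (S n)); lra.
Qed.

Lemma finite_min_pos (P : nat -> Prop) (a : nat -> R) J :
  (forall n, (n < J)%nat -> P n -> 0 < a n) ->
  exists e, 0 < e /\ forall n, (n < J)%nat -> P n -> e <= a n.
Proof.
  induction J as [|J IH]; intros Ha.
  - exists 1; split; [lra | intros; lia].
  - destruct IH as [e [He HeJ]]; [intros n Hn; apply Ha; lia|].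
    destruct (classic (P J)) as [PJ|PJ].
    + exists (Rmin e (a J)); split; [apply Rmin_pos; auto; apply Ha; auto|].
      intros n Hn Pn; destruct (Nat.eq_dec n J) as [->|]; [apply Rmin_r|].
      eapply Rle_trans; [apply Rmin_l | apply HeJ; auto; lia].
    + exists e; split; auto; intros n Hn Pn.
      destruct (Nat.eq_dec n J) as [->|]; [contradiction | apply HeJ; auto; lia].
Qed.

Lemma inv_succ_lt e J j : e > 0 -> / e < INR J -> (J <= j)%nat -> / (INR j + 1) < e.
Proof.
  intros He HJ Hj; pose proof (le_INR _ _ Hj); pose proof (Rinv_0_lt_compat e He).
  rewrite <- (Rinv_inv e); apply Rinv_lt_contravar; [apply Rmult_lt_0_compat|]; lra.
Qed.

Lemma dominating_weights (d : nat -> nat -> nat -> R) :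
  exists w : nat -> R, (forall n, 0 <= w n) /\
    forall s t n, (s <= n)%nat -> (t <= n)%nat -> d s t n <> 0 ->
      INR n <= w n * Rabs (d s t n).
Proof.
  set (c s t n := if Req_dec_T (d s t n) 0 then 0 else / Rabs (d s t n)).
  assert (Hc : forall s t n, 0 <= c s t n).
  { intros s t n; unfold c; destruct (Req_dec_T _ _); [lra|].
    left; apply Rinv_0_lt_compat, Rabs_pos_lt; auto. }
  set (S n := sum_f_R0 (fun t => sum_f_R0 (fun s => c s t n) n) n).
  assert (HS : forall n, 0 <= S n).
  { intros n; apply cond_pos_sum; intros; apply cond_pos_sum; auto. }
  exists (fun n => INR n * S n); split.
  - intros n; apply Rmult_le_pos; [apply pos_INR | auto].
  - intros s t n Hs Ht Hd.
    assert (Hcs : / Rabs (d s t n) <= S n).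
    { replace (/ Rabs (d s t n)) with (c s t n)
        by (unfold c; destruct (Req_dec_T _ _); [contradiction | reflexivity]).
      apply Rle_trans with (sum_f_R0 (fun s => c s t n) n).
      - apply (term_le_sum (fun s => c s t n)); auto.
      - apply (term_le_sum (fun t => sum_f_R0 (fun s => c s t n) n)); auto.
        intros; apply cond_pos_sum; auto. }
    pose proof (Rabs_pos_lt _ Hd) as Hpos.
    apply Rmult_le_compat_l with (r := Rabs (d s t n)) in Hcs; [|lra].
    rewrite Rinv_r in Hcs by lra.
    pose proof (pos_INR n); nra.
Qed.

Definition bounded_above (u : nat -> R) : Prop := exists M, forall n, u n <= M.

Lemma bounded_range u : bounded_above u -> bound (fun r => exists n, r = u n).
Proof. intros [M HM]; exists M; intros r [n ->]; apply HM. Qed.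

(* The supremum of a real sequence, set to 0 when the sequence is unbounded;
   totality lets us define functions by suprema before knowing boundedness. *)
Definition supR (u : nat -> R) : R :=
  match excluded_middle_informative (bounded_above u) with
  | left Hb => proj1_sig (completeness _ (bounded_range u Hb)
                 (ex_intro _ (u 0%nat) (ex_intro _ 0%nat eq_refl)))
  | right _ => 0
  end.

Lemma supR_lub u : bounded_above u ->
  (forall n, u n <= supR u) /\ (forall M, (forall n, u n <= M) -> supR u <= M).
Proof.
  intros Hb; unfold supR.
  destruct (excluded_middle_informative (bounded_above u)) as [Hb'|]; [|contradiction].
  destruct (completeness _ _ _) as [s [Hub Hleast]]; simpl; split.
  - intros n; apply Hub; exists n; reflexivity.
  - intros M HM; apply Hleast; intros r [n ->]; apply HM.
Qed.

Lemma Rabs_le_bounds x e : Rabs x <= e -> - e <= x <= e.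
Proof. split_Rabs; lra. Qed.

Lemma supR_close u u' e :
  (forall n, Rabs (u' n - u n) <= e) -> Rabs (supR u' - supR u) <= e.
Proof.
  intros H.
  assert (He : 0 <= e) by (eapply Rle_trans; [apply Rabs_pos | apply (H 0%nat)]).
  assert (Hn : forall n, u n - e <= u' n <= u n + e)
    by (intros n; specialize (H n); apply Rabs_le_bounds in H; lra).
  destruct (classic (bounded_above u)) as [B|B].
  - assert (B' : bounded_above u').
    { destruct B as [M HM]; exists (M + e); intros n; specialize (HM n); specialize (Hn n); lra. }
    destruct (supR_lub u B) as [ub lub]; destruct (supR_lub u' B') as [ub' lub'].
    apply Rabs_le; split.
    + enough (supR u <= supR u' + e) by lra.
      apply lub; intros n; specialize (ub' n); specialize (Hn n); lra.
    + enough (supR u' <= supR u + e) by lra.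
      apply lub'; intros n; specialize (ub n); specialize (Hn n); lra.
  - assert (B' : ~ bounded_above u').
    { intros [M HM]; apply B; exists (M + e); intros n; specialize (HM n); specialize (Hn n); lra. }
    unfold supR; destruct (excluded_middle_informative (bounded_above u)); [contradiction|].
    destruct (excluded_middle_informative (bounded_above u')); [contradiction|].
    rewrite Rminus_0_r, Rabs_R0; auto.
Qed.

Lemma eventually_zero_bounded u N :
  (forall n, (N <= n)%nat -> u n = 0) -> bounded_above u.
Proof.
  intros H; exists (sum_f_R0 (fun n => Rabs (u n)) N); intros n.
  assert (Hpos : forall n, 0 <= Rabs (u n)) by (intros; apply Rabs_pos).
  destruct (Nat.le_gt_cases n N) as [Hn|Hn].
  - eapply Rle_trans; [apply Rle_abs | apply (term_le_sum (fun n => Rabs (u n))); auto].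
  - rewrite H by lia; apply cond_pos_sum; auto.
Qed.

Lemma greedy_sequence {A : Type} (I : A -> Prop) (R : A -> A -> Prop) :
  (forall L : list A, (forall a, In a L -> I a) ->
     exists b, I b /\ forall a, In a L -> R a b) ->
  exists e : nat -> A, (forall t, I (e t)) /\ forall s t, (s < t)%nat -> R (e s) (e t).
Proof.
  intros Hext.
  destruct (Hext nil) as [a0 _]; [intros a []|].
  set (next L := epsilon (inhabits a0) (fun b => I b /\ forall a, In a L -> R a b)).
  set (history := fix h t := match t with O => nil | S t => next (h t) :: h t end).
  assert (Hhist : forall t a, In a (history t) -> I a).
  { induction t as [|t IH]; intros a Ha; [destruct Ha|].
    destruct Ha as [<-|Ha]; auto.
    exact (proj1 (epsilon_spec (inhabits a0) _ (Hext _ IH))). }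
  assert (Hmem : forall s t, (s < t)%nat -> In (next (history s)) (history t)).
  { induction t as [|t IH]; intros Hs; [lia|].
    destruct (Nat.eq_dec s t) as [->|]; [left; auto | right; apply IH; lia]. }
  exists (fun t => next (history t)); split.
  - intros t; exact (proj1 (epsilon_spec (inhabits a0) _ (Hext _ (Hhist t)))).
  - intros s t Hst.
    exact (proj2 (epsilon_spec (inhabits a0) _ (Hext _ (Hhist t))) _ (Hmem s t Hst)).
Qed.

Lemma list_choice {A B : Type} (C : B -> Prop) (P : A -> B -> Prop) (L : list A) :
  (forall a, In a L -> exists b, C b /\ P a b) ->
  exists l : list B, (forall b, In b l -> C b) /\ forall a, In a L -> exists b, In b l /\ P a b.
Proof.
  induction L as [|a L IH]; intros H.
  - exists nil; split; [intros b [] | intros a []].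
  - destruct IH as [l [Hl1 Hl2]]; [intros; apply H; right; auto|].
    destruct (H a (or_introl eq_refl)) as [b [Cb Pb]].
    exists (b :: l); split.
    + intros b' [<-|Hb']; auto.
    + intros a' [<-|Ha']; [exists b; split; [left|]; auto|].
      destruct (Hl2 a' Ha') as [b' [Hb' Pb']]; exists b'; split; [right|]; auto.
Qed.

Lemma class_index {A : Type} (Rel : A -> A -> Prop) (b : nat -> A) :
  (forall x y, Rel x y -> Rel y x) -> (forall x y z, Rel x y -> Rel y z -> Rel x z) ->
  (forall t, Rel (b t) (b t)) -> (forall s t, Rel (b s) (b t) -> s = t) ->
  exists Lam : A -> R, (forall x y, Rel x y -> Lam x = Lam y) /\ forall t, Lam (b t) = INR t.
Proof.
  intros Hsym Htrans Hrefl Hdistinct.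
  set (Lam x := match excluded_middle_informative (exists t, Rel x (b t)) with
                | left H => INR (proj1_sig (constructive_indefinite_description _ H))
                | right _ => 0 end).
  assert (Hindex : forall x t, Rel x (b t) -> Lam x = INR t).
  { intros x t Hxt; unfold Lam.
    destruct (excluded_middle_informative _) as [H|H]; [|exfalso; eauto].
    destruct (constructive_indefinite_description _ H) as [s Hs]; simpl.
    f_equal; apply Hdistinct, Htrans with x; auto. }
  exists Lam; split; [|intros t; apply Hindex, Hrefl].
  intros x y Hxy; destruct (classic (exists t, Rel y (b t))) as [[t Hyt]|Hnone].
  - rewrite (Hindex y t Hyt); apply Hindex; eauto.
  - unfold Lam; destruct (excluded_middle_informative (exists t, Rel x (b t))) as [[t Hxt]|].
    + exfalso; eauto.
    + destruct (excluded_middle_informative (exists t, Rel y (b t))); [contradiction | auto].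
Qed.

Lemma R_open_ball (a e : R) : R_open (fun y => Rabs (y - a) < e).
Proof.
  intros y Hy; exists (e - Rabs (y - a)); split; [lra|].
  intros z Hz; pose proof (Rabs_triang (z - y) (y - a)) as Htri.
  replace (z - y + (y - a)) with (z - a) in Htri by ring; lra.
Qed.

Lemma compact_countably_compact {T : Type} (open : (T -> Prop) -> Prop) (Q : T -> Prop) :
  compact_in open Q -> countably_compact_in open Q.
Proof.
  intros Hc U HU Hcov.
  destruct (Hc (fun V => exists n, V = U n)) as [l [Hl Hsub]].
  - intros V [n ->]; auto.
  - intros q Hq; destruct (Hcov q Hq) as [n Hn]; exists (U n); eauto.
  - assert (Hbound : exists N, forall V, In V l -> exists n, (n < N)%nat /\ V = U n).
    { clear Hsub; induction l as [|V l IH].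
      - exists 0%nat; intros V [].
      - destruct IH as [N HN]; [intros; apply Hl; right; auto|].
        destruct (Hl V (or_introl eq_refl)) as [m ->].
        exists (Nat.max N (S m)); intros V' [<-|HV'].
        + exists m; split; [lia | auto].
        + destruct (HN V' HV') as [n [Hn ->]]; exists n; split; [lia | auto]. }
    destruct Hbound as [N HN]; exists N; intros q Hq.
    destruct (Hsub q Hq) as [V [HV Vq]]; destruct (HN V HV) as [n [Hn ->]]; eauto.
Qed.

(* Countable compactness implies pseudocompactness, in any space: the open
   sets { |g| < n } cover Q, so finitely many of them do. *)
Lemma countably_compact_pseudocompact {T : Type} (open : (T -> Prop) -> Prop)
  (Q : T -> Prop) : countably_compact_in open Q -> pseudocompact_in open Q.
Proof.
  intros Hcc g Hg.
  assert (Hlevel : forall n : nat, { U : T -> Prop | open U /\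
            forall q, Rabs (g q) < INR n <-> U (proj1_sig q) }).
  { intros n; apply constructive_indefinite_description.
    apply (Hg (fun y => Rabs y < INR n)).
    intros y Hy; destruct (R_open_ball 0 (INR n) y) as [eps [Heps Hball]];
      [rewrite Rminus_0_r; auto|].
    exists eps; split; auto; intros z Hz; specialize (Hball z Hz);
      rewrite Rminus_0_r in Hball; auto. }
  destruct (Hcc (fun n => proj1_sig (Hlevel n))) as [N HN].
  - intros n; apply (proj1 (proj2_sig (Hlevel n))).
  - intros q Hq; destruct (INR_unbounded (Rabs (g (exist _ q Hq)))) as [n Hn].
    exists n; apply (proj2 (proj2_sig (Hlevel n)) (exist _ q Hq)); lra.
  - exists (INR N); intros q.
    destruct (HN _ (proj2_sig q)) as [n [Hn Uq]].
    apply (proj2 (proj2_sig (Hlevel n)) q) in Uq; apply lt_INR in Hn; lra.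
Qed.

Lemma T1_isolating_neighbourhood {T : Type} (open : (T -> Prop) -> Prop)
  (Htop : is_topology open) (HT1 : T1 open) (z : nat -> T) (x : T) (U : T -> Prop) J :
  open U -> U x -> (forall j, (J <= j)%nat -> ~ U (z j)) ->
  exists V, open V /\ V x /\ forall n, V (z n) -> z n = x.
Proof.
  destruct Htop as [Hfull [_ [Hinter _]]]; intros HU Ux HJ.
  assert (Hfin : forall K, exists V, open V /\ V x /\
            forall n, (n < K)%nat -> V (z n) -> z n = x).
  { induction K as [|K IH].
    - exists (fun _ => True); repeat split; auto; intros; lia.
    - destruct IH as [V [HV [Vx HVz]]].
      destruct (classic (z K = x)) as [E|E].
      + exists V; repeat split; auto; intros n Hn Vn.
        destruct (Nat.eq_dec n K) as [->|]; auto; apply HVz; auto; lia.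
      + destruct (HT1 x (z K) (fun H => E (eq_sym H))) as [W [HW [Wx Wz]]].
        exists (fun y => V y /\ W y); repeat split; auto; intros n Hn [Vn Wn].
        destruct (Nat.eq_dec n K) as [->|]; [contradiction | apply HVz; auto; lia]. }
  destruct (Hfin J) as [V [HV [Vx HVz]]].
  exists (fun y => U y /\ V y); repeat split; auto; intros n [Un Vn].
  destruct (Nat.lt_ge_cases n J); [apply HVz; auto | exfalso; apply (HJ n); auto].
Qed.

Lemma pseudocompact_no_unbounded {T : Type} (open : (T -> Prop) -> Prop) (Q : T -> Prop)
  (psi : {t : T | Q t} -> R) :
  pseudocompact_in open Q -> continuous (subspace_open open Q) R_open psi ->
  (forall j : nat, exists q, INR j <= psi q) -> False.
Proof.
  intros Hpc Hpsi Hlarge; destruct (Hpc psi Hpsi) as [M HM].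
  destruct (INR_unbounded M) as [j Hj]; destruct (Hlarge j) as [q Hq].
  pose proof (Rle_trans _ _ _ (Rle_abs _) (HM q)); lra.
Qed.

Definition tent (c t : R) : R := Rmax 0 (1 - c * t).

Lemma tent_zero c t : 1 <= c * t -> tent c t = 0.
Proof. intros H; unfold tent; apply Rmax_left; lra. Qed.

Lemma tent_zero_radius r t : 0 < r -> r <= t -> tent (/ r) t = 0.
Proof.
  intros Hr Ht; apply tent_zero.
  rewrite <- (Rinv_l r) by lra; apply Rmult_le_compat_l; [left; apply Rinv_0_lt_compat|]; lra.
Qed.

Lemma tent_lipschitz c s t : 0 < c -> Rabs (tent c s - tent c t) <= c * Rabs (s - t).
Proof.
  intros Hc; unfold tent, Rmax.
  rewrite <- (Rabs_pos_eq c) by lra; rewrite <- Rabs_mult.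
  repeat destruct (Rle_dec _ _); split_Rabs; nra.
Qed.

Lemma linear_modulus a b eps : 0 <= a -> 0 < b -> 0 < eps ->
  exists dl, 0 < dl /\ dl <= b /\ forall x, 0 <= x -> x < dl -> a * x < eps.
Proof.
  intros Ha Hb He; set (y := eps / (a + 1)).
  assert (Hy : y * (a + 1) = eps) by (unfold y; field; lra).
  assert (Hy0 : 0 < y) by (unfold y; apply Rdiv_lt_0_compat; lra).
  exists (Rmin b y); repeat split; [apply Rmin_pos; lra | apply Rmin_l|].
  intros x Hx Hxd; pose proof (Rmin_r b y); nra.
Qed.

Lemma Rinv_close a a' eps : 0 < a -> 0 < eps ->
  Rabs (a' - a) < Rmin (a / 2) (eps * a * a / 2) -> Rabs (/ a' - / a) < eps.
Proof.
  intros Ha He H.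
  pose proof (Rmin_l (a / 2) (eps * a * a / 2)); pose proof (Rmin_r (a / 2) (eps * a * a / 2)).
  assert (Ha' : a / 2 < a') by (apply Rabs_def2 in H; lra).
  replace (/ a' - / a) with ((a - a') / (a * a')) by (field; lra).
  assert (Hp : 0 < a * a') by nra.
  unfold Rdiv; rewrite Rabs_mult, (Rabs_pos_eq (/ (a * a'))) by (left; apply Rinv_0_lt_compat; lra).
  apply Rmult_lt_reg_r with (a * a'); [lra|].
  rewrite Rmult_assoc, Rinv_l, Rmult_1_r, Rabs_minus_sym by lra.
  assert (0 < eps * a) by nra; nra.
Qed.

(* A subset Q of a pseudometric space on which every continuous real function
   is bounded is compact (for covers by relatively open sets): it is totally
   bounded, and every open cover has a Lebesgue number. *)
Section PseudometricPseudocompact.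
Variables (T : Type) (d : T -> T -> R).
Hypothesis d_self : forall x, d x x = 0.
Hypothesis d_sym : forall x y, d x y = d y x.
Hypothesis d_triangle : forall x y z, d x z <= d x y + d y z.
Variable Q : T -> Prop.

Lemma d_nonneg x y : 0 <= d x y.
Proof. pose proof (d_triangle x y x) as Htri; rewrite d_self, (d_sym y x) in Htri; lra. Qed.

Definition d_continuous (psi : {t : T | Q t} -> R) : Prop :=
  forall q eps, eps > 0 -> exists dl, dl > 0 /\
    forall q', d (proj1_sig q') (proj1_sig q) < dl -> Rabs (psi q' - psi q) < eps.

Hypothesis d_pseudocompact :
  forall psi, d_continuous psi -> exists M, forall q, Rabs (psi q) <= M.

(* Along a rho-separated sequence e, the bumps n * tent (d q (e n)) of width
   rho/4 are locally Lipschitz in q uniformly in n, since each q is within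
   rho/2 of at most one e n; hence their supremum is continuous. *)
Lemma separated_bumps_continuous (e : nat -> T) rho :
  rho > 0 -> (forall s t, s <> t -> rho <= d (e s) (e t)) ->
  d_continuous (fun q => supR (fun n => INR n * tent (/ (rho / 4)) (d (proj1_sig q) (e n)))).
Proof.
  intros Hrho Hsep.
  assert (Hunique : forall q s t, d q (e s) < rho / 2 -> d q (e t) < rho / 2 -> s = t).
  { intros q s t Hs Ht; apply NNPP; intros Hst; pose proof (Hsep s t Hst).
    pose proof (d_triangle (e s) q (e t)); rewrite d_sym in Hs; lra. }
  set (c := / (rho / 4)); assert (Hc0 : 0 < c) by (apply Rinv_0_lt_compat; lra).
  set (bump n q := INR n * tent c (d q (e n))).
  assert (Hbump_lip : forall q, exists K, 0 <= K /\ forall q' n, d q' q < rho / 4 ->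
            Rabs (bump n q' - bump n q) <= K * d q' q).
  { intros q; destruct (classic (exists n0, d q (e n0) < rho / 2)) as [[n0 Hn0]|Hnone].
    - exists (INR n0 * c); split; [pose proof (pos_INR n0); nra|]; intros q' n Hq'.
      destruct (Rlt_le_dec (d q (e n)) (rho / 2)) as [Hn|Hn].
      + rewrite (Hunique q n n0 Hn Hn0); unfold bump.
        rewrite <- Rmult_minus_distr_l, Rabs_mult, Rabs_pos_eq by apply pos_INR.
        rewrite Rmult_assoc; apply Rmult_le_compat_l; [apply pos_INR|].
        eapply Rle_trans; [apply tent_lipschitz; lra|]; apply Rmult_le_compat_l; [lra|].
        pose proof (d_triangle q' q (e n0)); pose proof (d_triangle q q' (e n0)).
        rewrite (d_sym q q') in *; split_Rabs; lra.
      + pose proof (d_triangle q q' (e n)); rewrite (d_sym q q') in *.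
        unfold bump, c; rewrite !tent_zero_radius by lra.
        rewrite Rminus_diag, Rabs_R0; apply Rmult_le_pos; [|apply d_nonneg].
        apply Rmult_le_pos; [apply pos_INR | left; apply Rinv_0_lt_compat; lra].
    - exists 0; split; [lra|]; intros q' n Hq'.
      assert (Hn : rho / 2 <= d q (e n)) by (apply Rnot_lt_le; intros Hn; apply Hnone; eauto).
      pose proof (d_triangle q q' (e n)); rewrite (d_sym q q') in *.
      unfold bump, c; rewrite !tent_zero_radius by lra.
      rewrite Rminus_diag, Rabs_R0; lra. }
  intros q eps Heps; destruct (Hbump_lip (proj1_sig q)) as [K [HK HKlip]].
  destruct (linear_modulus K (rho / 4) eps) as [dl [Hdl [Hdlb Hmod]]]; try lra.
  exists dl; split; [lra|]; intros q' Hq'.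
  eapply Rle_lt_trans; [apply supR_close; intros n; apply HKlip; lra|].
  apply Hmod; [apply d_nonneg | auto].
Qed.

(* Otherwise a rho-separated sequence e exists in Q, and the supremum of the
   bumps along e is continuous but takes the value t at e t. *)
Lemma totally_bounded rho : rho > 0 ->
  exists L : list T, (forall p, In p L -> Q p) /\
    forall q, Q q -> exists p, In p L /\ d q p < rho.
Proof.
  intros Hrho; apply NNPP; intros Hnot.
  destruct (greedy_sequence Q (fun a b => rho <= d b a)) as [e [HeQ Hsep]].
  { intros L HL; apply NNPP; intros Hno; apply Hnot; exists L; split; auto.
    intros q Hq; apply NNPP; intros Hfar; apply Hno; exists q; split; auto.
    intros p Hp; apply Rnot_lt_le; intros Hlt; apply Hfar; exists p; auto. }
  assert (Hsep' : forall s t, s <> t -> rho <= d (e s) (e t)).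
  { intros s t Hst; destruct (Nat.lt_total s t) as [Hlt|[Heq|Hgt]].
    - rewrite d_sym; auto.
    - contradiction.
    - auto. }
  destruct (d_pseudocompact _ (separated_bumps_continuous e rho Hrho Hsep')) as [M HM].
  destruct (INR_unbounded M) as [t Ht]; specialize (HM (exist _ (e t) (HeQ t))); simpl in HM.
  set (bump n := INR n * tent (/ (rho / 4)) (d (e t) (e n))) in HM.
  assert (Hbt : bump t = INR t).
  { unfold bump, tent; rewrite d_self, Rmax_right by lra; ring. }
  assert (Hbounded : bounded_above bump).
  { exists (INR t); intros n; destruct (Nat.eq_dec n t) as [->|Hnt]; [lra|].
    pose proof (Hsep' t n (not_eq_sym Hnt)).
    unfold bump; rewrite tent_zero_radius by lra.
    rewrite Rmult_0_r; apply pos_INR. }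
  pose proof (proj1 (supR_lub _ Hbounded) t); pose proof (Rle_abs (supR bump)); lra.
Qed.

Definition d_open_in (U : T -> Prop) : Prop :=
  forall q, Q q -> U q -> exists dl, dl > 0 /\ forall g, Q g -> d g q < dl -> U g.

(* For an open cover C of Q, the supremum r q of the radii (at most 1) of
   balls around q inside a member of C is positive and 1-Lipschitz. *)
Lemma cover_radius (C : (T -> Prop) -> Prop) :
  (forall U, C U -> d_open_in U) -> (forall q, Q q -> exists U, C U /\ U q) ->
  exists r : {t : T | Q t} -> R, (forall q, 0 < r q) /\
    (forall q q', r q <= r q' + d (proj1_sig q) (proj1_sig q')) /\
    (forall q rho, rho < r q ->
       exists U, C U /\ forall g, Q g -> d g (proj1_sig q) < rho -> U g).
Proof.
  intros HC Hcov.
  set (radius q t := 0 < t /\ t <= 1 /\ exists U, C U /\ forall g, Q g -> d g q < t -> U g).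
  assert (Hbound : forall q, bound (radius q)) by (intros q; exists 1; intros t [_ [Ht _]]; auto).
  assert (Hex : forall q, Q q -> exists t, radius q t).
  { intros q Hq; destruct (Hcov q Hq) as [U [CU Uq]].
    destruct (HC U CU q Hq Uq) as [dl [Hdl Hball]].
    exists (Rmin dl 1); repeat split; [apply Rmin_pos; lra | apply Rmin_r|].
    exists U; split; auto; intros g Hg Hd; apply Hball; auto.
    eapply Rlt_le_trans; [exact Hd | apply Rmin_l]. }
  set (r (q : {t | Q t}) := proj1_sig (completeness _ (Hbound _) (Hex _ (proj2_sig q)))).
  assert (Hr : forall q, is_lub (radius (proj1_sig q)) (r q))
    by (intros q; exact (proj2_sig (completeness _ (Hbound _) (Hex _ (proj2_sig q))))).
  clearbody r.
  assert (Hrpos : forall q, 0 < r q).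
  { intros q; destruct (Hex _ (proj2_sig q)) as [t Ht].
    pose proof (proj1 (Hr q) t Ht); destruct Ht; lra. }
  exists r; repeat split; auto.
  - intros q q'; apply (proj2 (Hr q)); intros t [Ht0 [Ht1 [U [CU HU]]]].
    set (D := d (proj1_sig q) (proj1_sig q')).
    destruct (Rle_dec t D) as [Hle|Hlt]; [pose proof (Hrpos q'); lra|].
    enough (Hrad : radius (proj1_sig q') (t - D)) by (pose proof (proj1 (Hr q') _ Hrad); lra).
    pose proof (d_nonneg (proj1_sig q) (proj1_sig q')).
    repeat split; try (unfold D in *; lra).
    exists U; split; auto; intros g Hg Hd; apply HU; auto.
    pose proof (d_triangle g (proj1_sig q') (proj1_sig q)) as Htri.
    rewrite (d_sym (proj1_sig q')) in Htri; unfold D in *; lra.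
  - intros q rho Hrho.
    assert (exists t, radius (proj1_sig q) t /\ rho < t) as [t [[_ [_ [U [CU HU]]]] Ht]].
    { apply NNPP; intros Hno; enough (r q <= rho) by lra.
      apply (proj2 (Hr q)); intros t Ht; apply Rnot_lt_le; intros Hlt; apply Hno; eauto. }
    exists U; split; auto; intros g Hg Hd; apply HU; auto; lra.
Qed.

(* Since r is 1-Lipschitz and positive, 1/r is continuous, hence bounded by
   some M >= 1; then 1/(2M) is a Lebesgue number of the cover. *)
Lemma lebesgue_number (C : (T -> Prop) -> Prop) :
  (forall U, C U -> d_open_in U) -> (forall q, Q q -> exists U, C U /\ U q) ->
  exists rho, rho > 0 /\ forall q, Q q ->
    exists U, C U /\ forall g, Q g -> d g q < rho -> U g.
Proof.
  intros HC Hcov; destruct (cover_radius C HC Hcov) as [r [Hrpos [Hrlip Hball]]].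
  destruct (d_pseudocompact (fun q => / r q)) as [M HM].
  { intros q eps Heps.
    exists (Rmin (r q / 2) (eps * r q * r q / 2)); split.
    - pose proof (Hrpos q); apply Rmin_pos; [lra|]; assert (0 < eps * r q) by nra; nra.
    - intros q' Hq'; apply Rinv_close; auto.
      pose proof (Hrlip q q') as Hle1; pose proof (Hrlip q' q) as Hle2.
      rewrite d_sym in Hle1; apply Rabs_def1; lra. }
  set (M' := Rmax M 1); assert (HM' : 1 <= M') by apply Rmax_r.
  exists (/ (2 * M')); split; [apply Rinv_0_lt_compat; lra|].
  intros q Hq; apply (Hball (exist _ q Hq)).
  assert (Hrq : / M' <= r (exist _ q Hq)).
  { pose proof (Rle_trans _ _ _ (Rle_abs _) (HM (exist _ q Hq))) as Hinv.
    rewrite <- (Rinv_inv (r _)); apply Rinv_le_contravar; [apply Rinv_0_lt_compat, Hrpos|].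
    unfold M'; pose proof (Rmax_l M 1); lra. }
  assert (/ (2 * M') < / M') by (apply Rinv_lt_contravar; nra); lra.
Qed.

Lemma d_compact (C : (T -> Prop) -> Prop) :
  (forall U, C U -> d_open_in U) -> (forall q, Q q -> exists U, C U /\ U q) ->
  exists l : list (T -> Prop), (forall U, In U l -> C U) /\
    forall q, Q q -> exists U, In U l /\ U q.
Proof.
  intros HC Hcov.
  destruct (lebesgue_number C HC Hcov) as [rho [Hrho Hleb]].
  destruct (totally_bounded rho Hrho) as [L [HLQ HLnet]].
  destruct (list_choice C (fun p U => forall g, Q g -> d g p < rho -> U g) L)
    as [l [Hl HLl]]; [intros p Hp; apply Hleb; auto|].
  exists l; split; auto; intros q Hq.
  destruct (HLnet q Hq) as [p [Hp Hqp]]; destruct (HLl p Hp) as [U [HU Hball]].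
  exists U; split; auto.
Qed.
End PseudometricPseudocompact.

Section TruncatedSupDistance.
Variable X : Type.

Definition trunc_dist_values (f g : X -> R) (r : R) : Prop :=
  r = 0 \/ exists x, r = Rmin 1 (Rabs (f x - g x)).

Lemma trunc_dist_values_bound f g : bound (trunc_dist_values f g).
Proof. exists 1; intros r [->|[x ->]]; [lra | apply Rmin_l]. Qed.

Definition trunc_dist (f g : X -> R) : R :=
  proj1_sig (completeness _ (trunc_dist_values_bound f g) (ex_intro _ 0 (or_introl eq_refl))).

Lemma trunc_dist_lub f g : is_lub (trunc_dist_values f g) (trunc_dist f g).
Proof. unfold trunc_dist; destruct (completeness _ _ _) as [s Hs]; exact Hs. Qed.

Lemma trunc_dist_ge f g x : Rmin 1 (Rabs (f x - g x)) <= trunc_dist f g.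
Proof. apply (proj1 (trunc_dist_lub f g)); right; eauto. Qed.

Lemma trunc_dist_nonneg f g : 0 <= trunc_dist f g.
Proof. apply (proj1 (trunc_dist_lub f g)); left; auto. Qed.

Lemma trunc_dist_le f g s : 0 <= s -> (forall x, Rmin 1 (Rabs (f x - g x)) <= s) -> trunc_dist f g <= s.
Proof. intros Hs H; apply (proj2 (trunc_dist_lub f g)); intros r [->|[x ->]]; auto. Qed.

Lemma trunc_dist_self f : trunc_dist f f = 0.
Proof.
  apply Rle_antisym; [|apply trunc_dist_nonneg]; apply trunc_dist_le; [lra|]; intros x.
  rewrite Rminus_diag, Rabs_R0; apply Rmin_r.
Qed.

Lemma trunc_dist_sym f g : trunc_dist f g = trunc_dist g f.
Proof.
  apply Rle_antisym; apply trunc_dist_le; try apply trunc_dist_nonneg;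
    intros x; rewrite Rabs_minus_sym; apply trunc_dist_ge.
Qed.

Lemma trunc_dist_triangle f g h : trunc_dist f h <= trunc_dist f g + trunc_dist g h.
Proof.
  apply trunc_dist_le; [pose proof (trunc_dist_nonneg f g); pose proof (trunc_dist_nonneg g h); lra|].
  intros x; pose proof (trunc_dist_ge f g x) as Hfg; pose proof (trunc_dist_ge g h x) as Hgh.
  pose proof (Rabs_triang (f x - g x) (g x - h x)) as Htri.
  replace (f x - g x + (g x - h x)) with (f x - h x) in Htri by ring.
  pose proof (Rabs_pos (f x - g x)); pose proof (Rabs_pos (g x - h x)).
  revert Hfg Hgh Htri; unfold Rmin; repeat destruct (Rle_dec _ _); lra.
Qed.

Lemma trunc_dist_lt_uniform f g t : trunc_dist f g < t -> t <= 1 -> forall x, Rabs (f x - g x) < t.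
Proof.
  intros H Ht x; pose proof (trunc_dist_ge f g x) as Hx; revert Hx; unfold Rmin.
  destruct (Rle_dec _ _); lra.
Qed.

Lemma uniform_le_trunc_dist f g s : 0 <= s -> (forall x, Rabs (f x - g x) <= s) -> trunc_dist f g <= s.
Proof. intros Hs H; apply trunc_dist_le; auto; intros x; eapply Rle_trans; [apply Rmin_r | auto]. Qed.
End TruncatedSupDistance.

Section GraphTopology.
Variables (X : Type) (openX : (X -> Prop) -> Prop).

Notation Y := (CX openX).
Notation val := (@proj1_sig (X -> R) _).

Lemma continuous_at_point (q : Y) x e : e > 0 ->
  exists U, openX U /\ U x /\ forall x', U x' -> Rabs (val q x' - val q x) < e.
Proof.
  intros He; exists (fun x' => Rabs (val q x' - val q x) < e); repeat split.
  - apply (proj2_sig q (fun y => Rabs (y - val q x) < e)), R_open_ball.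
  - rewrite Rminus_diag, Rabs_R0; auto.
  - auto.
Qed.

Definition tube (q : Y) (e : R) : X * R -> Prop := fun p => Rabs (snd p - val q (fst p)) < e.

Lemma tube_open q e : prod_open openX (tube q e).
Proof.
  intros x y Hxy; unfold tube in Hxy; simpl in Hxy.
  set (eta := (e - Rabs (y - val q x)) / 2); assert (Heta : eta > 0) by (unfold eta; lra).
  destruct (continuous_at_point q x eta Heta) as [U [HU [Ux HUx]]].
  exists U, eta; repeat split; auto.
  intros x' y' Hx' Hy'; unfold tube; simpl; specialize (HUx x' Hx').
  replace (y' - val q x') with ((y' - y) + ((y - val q x) + (val q x - val q x'))) by ring.
  pose proof (Rabs_triang (y' - y) ((y - val q x) + (val q x - val q x'))) as Htri1.
  pose proof (Rabs_triang (y - val q x) (val q x - val q x')) as Htri2.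
  rewrite (Rabs_minus_sym (val q x)) in Htri2; unfold eta in *; lra.
Qed.

Lemma graph_continuity_criterion (Q : Y -> Prop) (psi : {t : Y | Q t} -> R) :
  (forall q eps, eps > 0 -> exists G, prod_open openX G /\ F_G G (proj1_sig q) /\
      forall q', F_G G (proj1_sig q') -> Rabs (psi q' - psi q) < eps) ->
  continuous (subspace_open (graph_open openX) Q) R_open psi.
Proof.
  intros H V HV.
  exists (fun h => exists G, prod_open openX G /\ F_G G h /\
            forall q', F_G G (proj1_sig q') -> V (psi q')); split.
  - intros h [G [HG [Gh Hsub]]]; exists G; repeat split; auto; intros g Gg; exists G; auto.
  - intros q; split.
    + intros Vq; destruct (HV _ Vq) as [eps [Heps Hball]].
      destruct (H q eps Heps) as [G [HG [Gq Hclose]]].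
      exists G; repeat split; auto; intros q' Gq'; apply Hball, Hclose; auto.
    + intros [G [_ [Gq Hsub]]]; apply Hsub, Gq.
Qed.

Definition udist (f g : Y) : R := trunc_dist X (val f) (val g).

(* Functions on Q continuous for udist are continuous in the graph topology,
   since the tubes are graph-open. *)
Lemma udist_continuous_graph_continuous (Q : Y -> Prop) (psi : {t : Y | Q t} -> R) :
  d_continuous _ udist Q psi -> continuous (subspace_open (graph_open openX) Q) R_open psi.
Proof.
  intros H; apply graph_continuity_criterion; intros q e He.
  destruct (H q e He) as [dl [Hdl Hq]].
  exists (tube (proj1_sig q) (dl / 2)); repeat split; [apply tube_open | |].
  - intros x; unfold tube; simpl; rewrite Rminus_diag, Rabs_R0; lra.
  - intros q' Hq'; apply Hq.
    apply Rle_lt_trans with (dl / 2); [|lra].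
    apply uniform_le_trunc_dist; [lra|]; intros x; left; apply (Hq' x).
Qed.

(* Throughout, z is a sequence in X taking each value finitely often and
   isolated in the sense that every point has a neighbourhood meeting z only in
   that point; such a sequence lets us prescribe arbitrary positive tolerances
   at the points z n by a single open subset of X x R. *)
Section DiscreteSequence.
Variable z : nat -> X.
Hypothesis z_finite_fibres : forall x, exists J, forall j, (J <= j)%nat -> z j <> x.
Hypothesis z_isolated : forall x, exists U, openX U /\ U x /\ forall n, U (z n) -> z n = x.
Variable Q : Y -> Prop.
Hypothesis Q_pseudocompact : pseudocompact_in (graph_open openX) Q.

Definition box (k : X -> R) (eps : nat -> R) : X * R -> Prop :=
  fun p => forall n, fst p = z n -> Rabs (snd p - k (z n)) < eps n.

Lemma box_open k eps : (forall n, eps n > 0) -> prod_open openX (box k eps).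
Proof.
  intros Heps x y Hxy; destruct (z_finite_fibres x) as [J HJ].
  destruct (finite_min_pos (fun n => z n = x) (fun n => eps n - Rabs (y - k x)) J)
    as [e [He Hmin]].
  { intros n _ Hzn; specialize (Hxy n (eq_sym Hzn)); simpl in Hxy; rewrite Hzn in Hxy; lra. }
  destruct (z_isolated x) as [U [HU [Ux Hiso]]].
  exists U, e; repeat split; auto; intros x' y' Hx' Hy' n Hn; simpl in Hn |- *; subst x'.
  pose proof (Hiso n Hx') as Hzn.
  assert (Hlt : (n < J)%nat)
    by (destruct (Nat.lt_ge_cases n J); [auto | exfalso; apply (HJ n); auto]).
  specialize (Hmin n Hlt Hzn); rewrite Hzn.
  pose proof (Rabs_triang (y' - y) (y - k x)) as Htri.
  replace (y' - y + (y - k x)) with (y' - k x) in Htri by ring; lra.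
Qed.

Lemma box_continuity (psi : {t : Y | Q t} -> R) :
  (forall q e, e > 0 -> exists eps, (forall n, eps n > 0) /\ forall q',
     (forall n, Rabs (val (proj1_sig q') (z n) - val (proj1_sig q) (z n)) < eps n) ->
     Rabs (psi q' - psi q) < e) ->
  continuous (subspace_open (graph_open openX) Q) R_open psi.
Proof.
  intros H; apply graph_continuity_criterion; intros q e He.
  destruct (H q e He) as [eps [Heps Hclose]].
  exists (box (val (proj1_sig q)) eps); repeat split; [apply box_open; auto| |].
  - intros x n Hn; simpl in *; subst x; rewrite Rminus_diag, Rabs_R0; apply Heps.
  - intros q' Hq'; apply Hclose; intros n; apply (Hq' (z n) n eq_refl).
Qed.

Definition ev_eq (a b : X -> R) : Prop :=
  exists N, forall n, (N <= n)%nat -> a (z n) = b (z n).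

Lemma weighted_sup_continuous (w : nat -> R) (b : X -> R) :
  (forall n, 0 <= w n) ->
  continuous (subspace_open (graph_open openX) Q) R_open
    (fun q => supR (fun n => w n * Rabs (val (proj1_sig q) (z n) - b (z n)))).
Proof.
  intros Hw; apply box_continuity; intros q e He.
  exists (fun n => (e / 2) / (w n + 1)); split.
  { intros n; apply Rdiv_lt_0_compat; [lra | pose proof (Hw n); lra]. }
  intros q' Hq'; apply Rle_lt_trans with (e / 2); [|lra].
  apply supR_close; intros n; specialize (Hq' n); pose proof (Hw n).
  set (a := val (proj1_sig q) (z n)) in *; set (a' := val (proj1_sig q') (z n)) in *.
  rewrite <- Rmult_minus_distr_l, Rabs_mult, (Rabs_pos_eq (w n)) by auto.
  apply Rle_trans with (w n * ((e / 2) / (w n + 1))).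
  - apply Rmult_le_compat_l; auto; left; eapply Rle_lt_trans; [|exact Hq'].
    replace (a' - a) with ((a' - b (z n)) - (a - b (z n))) by ring; apply Rabs_triang_inv2.
  - replace (w n * (e / 2 / (w n + 1))) with (e / 2 - (e / 2) / (w n + 1)) by (field; lra).
    assert (0 < e / 2 / (w n + 1)) by (apply Rdiv_lt_0_compat; lra); lra.
Qed.

(* No b in Q can be perturbed, within Q and only at finitely many points of z,
   at arbitrarily late points of z: a weighted distance to b would be unbounded. *)
Lemma no_late_finite_perturbations (b : Y) :
  ~ (forall j, exists k : Y, Q k /\ ev_eq (val k) (val b) /\
       exists m, (j <= m)%nat /\ val k (z m) <> val b (z m)).
Proof.
  intros Hpert.
  assert (Hchoice : forall j, { p : Y * nat | Q (fst p) /\ ev_eq (val (fst p)) (val b) /\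
            (j <= snd p)%nat /\ val (fst p) (z (snd p)) <> val b (z (snd p)) }).
  { intros j; apply constructive_indefinite_description.
    destruct (Hpert j) as [k [Hk [Hev [m Hm]]]]; exists (k, m); simpl; tauto. }
  set (k j := fst (proj1_sig (Hchoice j))); set (m j := snd (proj1_sig (Hchoice j))).
  assert (Hkm : forall j, Q (k j) /\ ev_eq (val (k j)) (val b) /\ (j <= m j)%nat /\
                  val (k j) (z (m j)) <> val b (z (m j))) by (intros j; exact (proj2_sig (Hchoice j))).
  clearbody k m; clear Hchoice Hpert.
  destruct (dominating_weights (fun s _ n => val (k s) (z n) - val b (z n))) as [w [Hw Hdom]].
  apply (pseudocompact_no_unbounded _ Q _ Q_pseudocompact (weighted_sup_continuous w (val b) Hw)).
  intros j; destruct (Hkm j) as [Hk [[N HN] [Hjm Hne]]].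
  exists (exist _ (k j) Hk); simpl.
  set (u n := w n * Rabs (val (k j) (z n) - val b (z n))).
  assert (Hu : bounded_above u).
  { apply (eventually_zero_bounded u N); intros n Hn; unfold u.
    rewrite HN, Rminus_diag, Rabs_R0 by auto; ring. }
  apply Rle_trans with (INR (m j)); [apply le_INR; auto|].
  apply Rle_trans with (u (m j)); [apply (Hdom j 0%nat); [auto | lia | lra]|].
  apply (proj1 (supR_lub u Hu)).
Qed.

(* Nor can Q contain a sequence of functions that pairwise differ at infinitely
   many points of z: for suitable weights, "weighted difference along z bounded"
   separates them, and the index of the class is continuous and unbounded. *)
Lemma no_separated_sequence (b : nat -> Y) :
  (forall t, Q (b t)) -> (forall s t, s <> t -> ~ ev_eq (val (b s)) (val (b t))) -> False.
Proof.
  intros HbQ Hsep.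
  destruct (dominating_weights (fun s t n => val (b s) (z n) - val (b t) (z n))) as [w [Hw Hdom]].
  set (close (k k' : X -> R) := exists M, forall n, w n * Rabs (k (z n) - k' (z n)) <= M).
  assert (Hsym : forall k k', close k k' -> close k' k).
  { intros k k' [M HM]; exists M; intros n; rewrite Rabs_minus_sym; auto. }
  assert (Htrans : forall k1 k2 k3, close k1 k2 -> close k2 k3 -> close k1 k3).
  { intros k1 k2 k3 [M1 H1] [M2 H2]; exists (M1 + M2); intros n.
    specialize (H1 n); specialize (H2 n); pose proof (Hw n).
    pose proof (Rabs_triang (k1 (z n) - k2 (z n)) (k2 (z n) - k3 (z n))) as Htri.
    replace (k1 (z n) - k2 (z n) + (k2 (z n) - k3 (z n))) with (k1 (z n) - k3 (z n)) in Htri by ring.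
    pose proof (Rmult_le_compat_l _ _ _ (Hw n) Htri); lra. }
  assert (Hrefl : forall t, close (val (b t)) (val (b t))).
  { intros t; exists 0; intros n; rewrite Rminus_diag, Rabs_R0; lra. }
  assert (Hdistinct : forall s t, close (val (b s)) (val (b t)) -> s = t).
  { intros s t [M HM]; apply NNPP; intros Hst; apply (Hsep s t Hst).
    destruct (INR_unbounded M) as [N HN].
    exists (N + s + t)%nat; intros n Hn.
    apply NNPP; intros Hne; specialize (HM n).
    pose proof (Hdom s t n ltac:(lia) ltac:(lia) ltac:(intros E; apply Hne; lra)).
    pose proof (le_INR N n ltac:(lia)); lra. }
  destruct (class_index close (fun t => val (b t)) Hsym Htrans Hrefl Hdistinct)
    as [Lam [Hinv Hb]].
  apply (pseudocompact_no_unbounded _ Q (fun q => Lam (val (proj1_sig q))) Q_pseudocompact).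
  - apply box_continuity; intros q e He.
    exists (fun n => / (w n + 1)); split; [intros n; apply Rinv_0_lt_compat; pose proof (Hw n); lra|].
    intros q' Hq'; cbv beta.
    assert (Hclose : close (val (proj1_sig q')) (val (proj1_sig q))).
    { exists 1; intros n; specialize (Hq' n); pose proof (Hw n).
      apply Rle_trans with (w n * / (w n + 1)); [apply Rmult_le_compat_l; lra|].
      replace (w n * / (w n + 1)) with (1 - / (w n + 1)) by (field; lra).
      assert (0 < / (w n + 1)) by (apply Rinv_0_lt_compat; lra); lra. }
    erewrite Hinv by exact Hclose; rewrite Rminus_diag, Rabs_R0; auto.
  - intros t; exists (exist _ (b t) (HbQ t)); simpl; rewrite Hb; lra.
Qed.

(* Only finitely many k i agree eventually along z with
   any given b in Q: otherwise b would admit late finite perturbations in Q. *)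
Section PointwiseApproximants.
Variables (k : nat -> Y) (f : X -> R).
Hypothesis k_in_Q : forall i, Q (k i).
Hypothesis k_converges : forall n e, e > 0 ->
  exists I, forall i, (I <= i)%nat -> Rabs (val (k i) (z n) - f (z n)) < e.
Hypothesis k_differs : forall i, val (k i) (z i) <> f (z i).

Lemma finitely_many_agree (b : Y) : Q b ->
  exists I, forall i, (I <= i)%nat -> ~ ev_eq (val (k i)) (val b).
Proof.
  intros Hb; apply NNPP; intros Hinf.
  assert (Hcofinal : forall I, exists i, (I <= i)%nat /\ ev_eq (val (k i)) (val b)).
  { intros I; apply NNPP; intros Hno; apply Hinf; exists I; intros i Hi Hev; eauto. }
  apply (no_late_finite_perturbations b); intros j.
  destruct (classic (ev_eq (val b) f)) as [[N HN]|Hbf].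
  - destruct (Hcofinal (Nat.max j N)) as [i [Hi Hev]].
    exists (k i); repeat split; auto; exists i; split; [lia|].
    rewrite HN by lia; apply k_differs.
  - assert (exists m, (j <= m)%nat /\ val b (z m) <> f (z m)) as [m [Hjm Hm]].
    { apply NNPP; intros Hno; apply Hbf; exists j; intros n Hn.
      apply NNPP; intros Hne; apply Hno; eauto. }
    destruct (k_converges m (Rabs (val b (z m) - f (z m)))) as [I HI];
      [apply Rabs_pos_lt; lra|].
    destruct (Hcofinal I) as [i [Hi Hev]].
    exists (k i); repeat split; auto; exists m; split; auto.
    intros E; specialize (HI i Hi); rewrite E in HI; lra.
Qed.

(* Hence a subsequence of the k i pairwise disagrees infinitely often along z,
   which Q cannot contain. *)
Lemma no_pointwise_approximants : False.
Proof.
  destruct (greedy_sequence (fun _ => True) (fun s i => ~ ev_eq (val (k i)) (val (k s))))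
    as [e [_ He]].
  - intros L _.
    assert (HL : exists I, forall i, (I <= i)%nat -> forall s, In s L ->
               ~ ev_eq (val (k i)) (val (k s))).
    { induction L as [|s L [I HI]].
      - exists 0%nat; intros i _ s [].
      - destruct (finitely_many_agree (k s) (k_in_Q s)) as [I' HI'].
        exists (Nat.max I I'); intros i Hi s' [<-|Hs']; [apply HI' | apply HI]; auto; lia. }
    destruct HL as [I HI]; exists I; split; auto; apply HI; lia.
  - apply (no_separated_sequence (fun t => k (e t))); [intros t; apply k_in_Q|].
    intros s t Hst [N HN]; destruct (Nat.lt_total s t) as [Hlt|[Heq|Hgt]].
    + apply (He s t Hlt); exists N; intros n Hn; symmetry; auto.
    + contradiction.
    + apply (He t s Hgt); exists N; auto.
Qed.
End PointwiseApproximants.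
End DiscreteSequence.

Section T1Space.
Hypothesis Htop : is_topology openX.
Hypothesis HT1 : T1 openX.

Lemma approximants_escape (f : Y) (G : X * R -> Prop) (k : nat -> X -> R) (z : nat -> X) :
  prod_open openX G -> graph_in (val f) G ->
  (forall j x, Rabs (k j x - val f x) < / (INR j + 1)) ->
  (forall j, ~ G (z j, k j (z j))) ->
  forall x, exists U, openX U /\ U x /\ exists J, forall j, (J <= j)%nat -> ~ U (z j).
Proof.
  intros HG Hf Hk Hout x; destruct Htop as [_ [_ [Hinter _]]].
  destruct (HG x (val f x) (Hf x)) as [U0 [eps [HU0 [U0x [Heps HU0G]]]]].
  destruct (continuous_at_point f x (eps / 2)) as [U1 [HU1 [U1x Hf1]]]; [lra|].
  exists (fun x' => U0 x' /\ U1 x'); split; [apply Hinter; auto|]; split; [auto|].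
  destruct (INR_unbounded (/ (eps / 2))) as [J HJ]; exists J; intros j Hj [U0z U1z].
  apply (Hout j), HU0G; auto.
  pose proof (inv_succ_lt (eps / 2) J j ltac:(lra) HJ Hj); specialize (Hk j (z j)).
  specialize (Hf1 _ U1z).
  replace (k j (z j) - val f x) with ((k j (z j) - val f (z j)) + (val f (z j) - val f x)) by ring.
  pose proof (Rabs_triang (k j (z j) - val f (z j)) (val f (z j) - val f x)); lra.
Qed.

(* Otherwise uniform approximants
   k j in Q leaving G at points z j yield a sequence z which is isolated and
   has finite fibres (by T1), contradicting no_pointwise_approximants. *)
Lemma graph_neighbourhood_uniform (Q : Y -> Prop) (f : Y) (G : X * R -> Prop) :
  pseudocompact_in (graph_open openX) Q -> prod_open openX G -> graph_in (val f) G ->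
  exists dl, dl > 0 /\ forall g, Q g ->
    (forall x, Rabs (val g x - val f x) < dl) -> graph_in (val g) G.
Proof.
  intros Hpc HG Hf; apply NNPP; intros Hnot.
  assert (Hbad : forall j : nat, { p : Y * X | Q (fst p) /\
            (forall x, Rabs (val (fst p) x - val f x) < / (INR j + 1)) /\
            ~ G (snd p, val (fst p) (snd p)) }).
  { intros j; apply constructive_indefinite_description.
    apply NNPP; intros Hno; apply Hnot; exists (/ (INR j + 1)); split.
    { apply Rinv_0_lt_compat; pose proof (pos_INR j); lra. }
    intros g Hg Hu x; apply NNPP; intros Hx; apply Hno; exists (g, x); simpl; auto. }
  set (k j := fst (proj1_sig (Hbad j))); set (z j := snd (proj1_sig (Hbad j))).
  assert (Hkz : forall j, Q (k j) /\ (forall x, Rabs (val (k j) x - val f x) < / (INR j + 1))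
                  /\ ~ G (z j, val (k j) (z j))) by (intros j; exact (proj2_sig (Hbad j))).
  clearbody k z; clear Hbad Hnot.
  pose proof (approximants_escape f G (fun j => val (k j)) z HG Hf
                (fun j => proj1 (proj2 (Hkz j))) (fun j => proj2 (proj2 (Hkz j)))) as Hesc.
  apply (no_pointwise_approximants z) with (Q := Q) (k := k) (f := val f).
  - intros x; destruct (Hesc x) as [U [_ [Ux [J HJ]]]].
    exists J; intros j Hj E; apply (HJ j Hj); rewrite E; auto.
  - intros x; destruct (Hesc x) as [U [HU [Ux [J HJ]]]].
    apply (T1_isolating_neighbourhood openX Htop HT1 z x U J); auto.
  - exact Hpc.
  - intros i; apply Hkz.
  - intros n e He; destruct (INR_unbounded (/ e)) as [I HI]; exists I; intros i Hi.
    pose proof (inv_succ_lt e I i He HI Hi); pose proof (proj1 (proj2 (Hkz i)) (z n)); lra.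
  - intros i E; apply (proj2 (proj2 (Hkz i))); rewrite E; apply Hf.
Qed.

Lemma graph_open_udist_open (Q : Y -> Prop) (U : Y -> Prop) :
  pseudocompact_in (graph_open openX) Q -> graph_open openX U -> d_open_in _ udist Q U.
Proof.
  intros Hpc HU f Hf Uf; destruct (HU f Uf) as [G [HG [Gf HGU]]].
  destruct (graph_neighbourhood_uniform Q f G Hpc HG Gf) as [dl [Hdl Hball]].
  exists (Rmin dl 1); split; [apply Rmin_pos; lra|]; intros g Hg Hd.
  apply HGU, Hball; auto; intros x.
  eapply Rlt_le_trans; [apply (trunc_dist_lt_uniform X _ _ (Rmin dl 1)); auto; apply Rmin_r|].
  apply Rmin_l.
Qed.

(* Pseudocompactness implies compactness in the graph topology: on Q the graph
   topology is the topology of the uniform distance, and pseudocompact subsets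
   of pseudometric spaces are compact. *)
Lemma pseudocompact_compact (Q : Y -> Prop) :
  pseudocompact_in (graph_open openX) Q -> compact_in (graph_open openX) Q.
Proof.
  intros Hpc C HC Hcov.
  apply (d_compact Y udist); auto.
  - intros; apply trunc_dist_self.
  - intros; apply trunc_dist_sym.
  - intros; apply trunc_dist_triangle.
  - intros psi Hpsi; apply Hpc, udist_continuous_graph_continuous, Hpsi.
  - intros U CU; apply graph_open_udist_open; auto.
Qed.
End T1Space.
End GraphTopology.

Theorem proposition2p4 (X : Type) (openX : (X -> Prop) -> Prop)
  (Htop : is_topology openX) (HT1 : T1 openX) (Q : CX openX -> Prop) :
  (compact_in (graph_open openX) Q <-> countably_compact_in (graph_open openX) Q) /\
  (countably_compact_in (graph_open openX) Q <-> pseudocompact_in (graph_open openX) Q).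
Proof.
  pose proof (compact_countably_compact (graph_open openX) Q) as Hcompact_cc.
  pose proof (countably_compact_pseudocompact (graph_open openX) Q) as Hcc_pc.
  pose proof (pseudocompact_compact X openX Htop HT1 Q) as Hpc_compact.
  tauto.
Qed.
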